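(* Let $\mathbf y_b\in\mathbb R^{n_b}$, $\mathbf X_b\in\mathbb R^{n_b\times m}$, $\mathbf V_b\in\mathbb R^{n_b\times n_b}$ symmetric positive definite, and $\mathbf A\in\mathbb R^{n\times n_b}$ of full column rank. Set $\mathbf y=\mathbf A\mathbf y_b$, $\mathbf X=\mathbf A\mathbf X_b$, $\mathbf V=\mathbf A\mathbf V_b\mathbf A^\top$, and define the projection-induced mappings $$\mathbf P_b=(\mathbf X_b^\top\mathbf V_b^{-1}\mathbf X_b)^{+}\mathbf X_b^\top\mathbf V_b^{-1}\in\mathbb R^{m\times n_b},\qquad \mathbf P=(\mathbf X^\top\mathbf V^{+}\mathbf X)^{+}\mathbf X^\top\mathbf V^{+}\in\mathbb R^{m\times n}.$$ Then $\mathbf P\mathbf A=\mathbf P_b$. In particular, for every row index $i$, writing $\mathbf p_i^\top$ and $\mathbf p_{b,i}^\top$ for the $i$-th rows of $\mathbf P$ and $\mathbf P_b$, one has $\mathbf p_{b,i}^\top=\mathbf p_i^\top\mathbf A$ and $\mathbf p_i^\top\mathbf y=\mathbf p_{b,i}^\top\mathbf y_b$. Moreover, if $\mathbf y_b=(\mathbf y_{b,1}^\top,\dots,\mathbf y_{b,K}^\top)^\top$ is partitioned into $K$ study blocks, $\mathbf V_b$ is block diagonal with respect to this partition, and $\mathbf A=\operatorname{diag}(\mathbf A_1,\dots,\mathbf A_K)$ is block diagonal with each $\mathbf A_k$ of full column rank, then for each study $k$ the corresponding blocks satisfy $\mathbf p_{b,i,k}^\top=\mathbf p_{i,k}^\top\mathbf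 A_k$ and $\mathbf p_{i,k}^\top\mathbf A_k\mathbf y_{b,k}=\mathbf p_{b,i,k}^\top\mathbf y_{b,k}$, i.e. each study-level contribution to the estimator is the same in both representations.
   Context: Notation as in network meta-analysis with observed contrasts $\mathbf y$, design matrix $\mathbf X$ and covariance $\mathbf V$; the GLS (network meta-analysis) estimator is $\hat{\boldsymbol\theta}=\mathbf P\mathbf y$ with $\mathbf P=(\mathbf X^\top\mathbf V^{+}\mathbf X)^{+}\mathbf X^\top\mathbf V^{+}$, where $^{+}$ denotes the Moore–Penrose pseudoinverse. The study-level contribution of study $k$ to the $i$-th estimated contrast is $\mathbf p_{i,k}^\top\mathbf y_k$, where $\mathbf p_{i,k}$ and $\mathbf y_k$ are the blocks of the $i$-th row of $\mathbf P$ and of $\mathbf y$ belonging to study $k$. The reduced representation $(\mathbf y_b,\mathbf X_b,\mathbf V_b)$ and the full representation $(\mathbf y,\mathbf X,\mathbf V)$ are related by the linear embedding $\mathbf A$ as stated. *)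

From HB Require Import structures.
From mathcomp Require Import all_boot all_order all_algebra.
From Stdlib Require Import ClassicalEpsilon.
Set Implicit Arguments. Unset Strict Implicit. Unset Printing Implicit Defensive.
Import Order.TTheory GRing.Theory Num.Theory.
Local Open Scope ring_scope.

Definition is_MPinv (R : realFieldType) (p q : nat)
  (A : 'M[R]_(p, q)) (B : 'M[R]_(q, p)) : Prop :=
  [/\ A *m B *m A = A, B *m A *m B = B,
      (A *m B)^T = A *m B & (B *m A)^T = B *m A].

(* The Moore-Penrose pseudoinverse A^+ (chosen by Hilbert's epsilon among the
   matrices satisfying the Penrose conditions; it exists and is unique over a
   real field). *)
Definition MPinv (R : realFieldType) (p q : nat) (A : 'M[R]_(p, q)) : 'M[R]_(q, p) :=
  epsilon (inhabits 0) (fun B => is_MPinv A B).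

Definition sym_posdef (R : realFieldType) (n : nat) (V : 'M[R]_n) : Prop :=
  V^T = V /\ forall x : 'cV[R]_n, x != 0 -> 0 < (x^T *m V *m x) 0 0.

Definition Pb_map (R : realFieldType) (nb m : nat)
  (Xb : 'M[R]_(nb, m)) (Vb : 'M[R]_nb) : 'M[R]_(m, nb) :=
  MPinv (Xb^T *m invmx Vb *m Xb) *m Xb^T *m invmx Vb.

Definition P_map (R : realFieldType) (n m : nat)
  (X : 'M[R]_(n, m)) (V : 'M[R]_n) : 'M[R]_(m, n) :=
  MPinv (X^T *m MPinv V *m X) *m X^T *m MPinv V.

Definition bdiag (R : realFieldType) (K : nat) (p_ q_ : 'I_K -> nat)
  (A_ : forall k, 'M[R]_(p_ k, q_ k)) : 'M[R]_(\sum_k p_ k, \sum_k q_ k) :=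
  mxblock (fun j k => if j == k then conform_mx 0 (A_ j) else 0).

(* Full column rank of A makes V = A Vb A^T pseudo-invertible in closed form:
   V^+ = (A^+)^T Vb^-1 A^+, where A^+ = (A^T A)^-1 A^T is a left inverse of A.
   Hence X^T V^+ X = Xb^T Vb^-1 Xb and X^T V^+ A = Xb^T Vb^-1, which gives
   P A = Pb.  For block-diagonal A, the k-th block of a row u A is the k-th
   block of u times A_k, so P A = Pb splits study by study. *)

From HB Require Import structures.
From mathcomp Require Import all_boot all_order all_algebra.
From Stdlib Require Import ClassicalEpsilon.
Set Implicit Arguments. Unset Strict Implicit. Unset Printing Implicit Defensive.
Import Order.TTheory GRing.Theory Num.Theory.
Local Open Scope ring_scope.

Section MoorePenrose.
Variable R : realFieldType.

Lemma is_MPinv_uniq p q (A : 'M[R]_(p, q)) B C :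
  is_MPinv A B -> is_MPinv A C -> B = C.
Proof.
case=> AB_A BA_B ABs BAs [AC_A CA_C ACs CAs].
have ABE : (A *m B)^T = (A *m B)^T *m (A *m C)^T.
  by rewrite -{1}AC_A !trmx_mul !mulmxA.
have CAE : (C *m A)^T = (B *m A)^T *m (C *m A)^T.
  by rewrite -{1}AB_A !trmx_mul !mulmxA.
have -> : B = B *m A *m C.
  by rewrite -{1}BA_B -mulmxA -ABs ABE ABs ACs !mulmxA BA_B.
symmetry; transitivity ((C *m A)^T *m C); first by rewrite CAs CA_C.
by rewrite CAE BAs CAs -(mulmxA (B *m A)) CA_C.
Qed.

Lemma MPinvE p q (A : 'M[R]_(p, q)) B : is_MPinv A B -> MPinv A = B.
Proof.
by move=> AB; apply: (is_MPinv_uniq _ AB); apply: epsilon_spec; exists B.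
Qed.

Lemma mulmx_tr_eq0 n (v : 'rV[R]_n) : v *m v^T = 0 -> v = 0.
Proof.
move=> /matrixP/(_ 0 0); rewrite !mxE => sum_sq0.
apply/rowP => j; rewrite mxE; apply/eqP; rewrite -sqrf_eq0; apply/eqP.
have sq_ge0 k : true -> 0 <= v 0 k * v^T k 0 by rewrite mxE -expr2 sqr_ge0.
by have := @psumr_eq0P _ _ _ _ sq_ge0 sum_sq0 j isT; rewrite mxE -expr2.
Qed.

Lemma row_free_gram_unit p q (A : 'M[R]_(p, q)) :
  row_free A -> A *m A^T \in unitmx.
Proof.
move=> Afree; rewrite -row_free_unit; apply: inj_row_free => u uAA0.
apply: (row_free_inj Afree); rewrite mul0mx; apply: mulmx_tr_eq0.
by rewrite trmx_mul mulmxA -(mulmxA u) uAA0 mul0mx.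
Qed.

Lemma is_MPinv_row_full p q (A : 'M[R]_(p, q)) :
  row_full A -> is_MPinv A (invmx (A^T *m A) *m A^T).
Proof.
move=> Afull; have := row_free_gram_unit (A := A^T).
rewrite trmxK /row_free mxrank_tr => /(_ Afull) Gu.
have LA : invmx (A^T *m A) *m A^T *m A = 1%:M by rewrite -mulmxA mulVmx.
have Gs : (invmx (A^T *m A))^T = invmx (A^T *m A).
  by rewrite trmx_inv trmx_mul trmxK.
split; first by rewrite -mulmxA LA mulmx1.
- by rewrite LA mul1mx.
- by rewrite !trmx_mul trmxK Gs mulmxA.
- by rewrite LA trmx1.
Qed.

Lemma row_full_is_MPinv p q (A : 'M[R]_(p, q)) :
  row_full A -> is_MPinv A (MPinv A).
Proof.
by move=> Afull; rewrite (MPinvE (is_MPinv_row_full Afull)); exact: is_MPinv_row_full.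
Qed.

Lemma row_full_MPinvK p q (A : 'M[R]_(p, q)) :
  row_full A -> MPinv A *m A = 1%:M.
Proof.
move=> Afull; have [AMA _ _ _] := row_full_is_MPinv Afull.
by apply: (row_full_inj Afull); rewrite mulmx1 mulmxA.
Qed.

Lemma MPinv_sandwich p q (A : 'M[R]_(p, q)) (M : 'M[R]_q) :
  row_full A -> M \in unitmx ->
  MPinv (A *m M *m A^T) = (MPinv A)^T *m invmx M *m MPinv A.
Proof.
move=> Afull Mu; set L := MPinv A.
have [_ _ ALs _] := row_full_is_MPinv Afull.
have LA : L *m A = 1%:M := row_full_MPinvK Afull.
have tLA : A^T *m L^T = 1%:M by rewrite -trmx_mul LA trmx1.
have VW : A *m M *m A^T *m (L^T *m invmx M *m L) = A *m L.
  by rewrite !mulmxA -(mulmxA _ A^T) tLA mulmx1 -(mulmxA _ M) mulmxV ?mulmx1.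
have WV : L^T *m invmx M *m L *m (A *m M *m A^T) = A *m L.
  by rewrite !mulmxA -(mulmxA _ L A) LA mulmx1 -(mulmxA _ _ M) mulVmx ?mulmx1 // -ALs trmx_mul.
apply: MPinvE; split; rewrite ?VW ?WV //.
- by rewrite !mulmxA -(mulmxA A L A) LA mulmx1.
- by rewrite -ALs trmx_mul !mulmxA -(mulmxA L^T A^T) tLA mulmx1.
Qed.

Lemma sym_posdef_unitmx n (V : 'M[R]_n) : sym_posdef V -> V \in unitmx.
Proof.
case=> _ Vpos; rewrite -row_free_unit; apply: inj_row_free => u uV0.
apply/eqP/negPn/negP => u_neq0.
have := Vpos u^T; rewrite trmx_eq0 trmxK uV0 mul0mx mxE ltxx.
by move/(_ u_neq0).
Qed.

Lemma P_map_embed n nb m (Xb : 'M[R]_(nb, m)) (Vb : 'M[R]_nb) (A : 'M[R]_(n, nb)) :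
  row_full A -> Vb \in unitmx ->
  P_map (A *m Xb) (A *m Vb *m A^T) *m A = Pb_map Xb Vb.
Proof.
move=> Afull Vbu; rewrite /P_map /Pb_map MPinv_sandwich //.
have LA := row_full_MPinvK Afull.
have tLA : A^T *m (MPinv A)^T = 1%:M by rewrite -trmx_mul LA trmx1.
have XWA : (A *m Xb)^T *m ((MPinv A)^T *m invmx Vb *m MPinv A) *m A
           = Xb^T *m invmx Vb.
  by rewrite trmx_mul !mulmxA -(mulmxA Xb^T A^T) tLA mulmx1 -(mulmxA _ _ A) LA mulmx1.
have XVX : (A *m Xb)^T *m ((MPinv A)^T *m invmx Vb *m MPinv A) *m (A *m Xb)
           = Xb^T *m invmx Vb *m Xb by rewrite mulmxA XWA.
by rewrite XVX -!(mulmxA (MPinv _)) XWA.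
Qed.

Lemma submxrow_mul_bdiag K (p_ q_ : 'I_K -> nat) (A_ : forall k, 'M[R]_(p_ k, q_ k))
  l (u : 'M[R]_(l, \sum_k p_ k)) k :
  submxrow (u *m bdiag A_) k = submxrow u k *m A_ k.
Proof.
rewrite /bdiag -{1}[u]submxrowK mul_mxrow_mxblock mxrowK (bigD1 k) //= eqxx.
by rewrite conform_mx_id big1 ?addr0 // => j /negbTE ->; rewrite mulmx0.
Qed.

Lemma submxcol_bdiag_mul K (p_ q_ : 'I_K -> nat) (A_ : forall k, 'M[R]_(p_ k, q_ k))
  l (x : 'M[R]_(\sum_k q_ k, l)) k :
  submxcol (bdiag A_ *m x) k = A_ k *m submxcol x k.
Proof.
rewrite /bdiag -{1}[x]submxcolK mul_mxblock_mxrow mxcolK (bigD1 k) //= eqxx.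
by rewrite conform_mx_id big1 ?addr0 // => j /negbTE; rewrite eq_sym => ->; rewrite mul0mx.
Qed.

Lemma bdiag_row_full K (p_ q_ : 'I_K -> nat) (A_ : forall k, 'M[R]_(p_ k, q_ k)) :
  (forall k, row_full (A_ k)) -> row_full (bdiag A_).
Proof.
move=> Afull; rewrite /row_full -mxrank_tr -/(row_free _).
apply: inj_row_free => v /(congr1 trmx); rewrite trmx_mul trmxK trmx0 => Av0.
apply: trmx_inj; rewrite trmx0 -[v^T]submxcolK -(mxcol0 _); apply: eq_mxcol => k.
by apply: (row_full_inj (Afull k)); rewrite -submxcol_bdiag_mul Av0 submxcol0 mulmx0.
Qed.

End MoorePenrose.

Theorem mainTheorem2 (R : realFieldType) (m : nat) :
  (forall (nb n : nat) (yb : 'cV[R]_nb) (Xb : 'M[R]_(nb, m)) (Vb : 'M[R]_nb)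
          (A : 'M[R]_(n, nb)),
      sym_posdef Vb -> \rank A = nb ->
      let y := A *m yb in
      let X := A *m Xb in
      let V := A *m Vb *m A^T in
      let Pb := Pb_map Xb Vb in
      let P := P_map X V in
      P *m A = Pb /\
      (forall i : 'I_m,
          row i Pb = row i P *m A /\ row i P *m y = row i Pb *m yb)) /\
  (forall (K : nat) (nb_ n_ : 'I_K -> nat)
          (yb_ : forall k, 'cV[R]_(nb_ k)) (Xb : 'M[R]_(\sum_k nb_ k, m))
          (Vb_ : forall k, 'M[R]_(nb_ k)) (A_ : forall k, 'M[R]_(n_ k, nb_ k)),
      let Vb := \mxdiag_k Vb_ k in
      let A := bdiag A_ in
      let yb := \mxcol_k yb_ k in
      sym_posdef Vb -> (forall k, \rank (A_ k) = nb_ k) ->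
      let X := A *m Xb in
      let V := A *m Vb *m A^T in
      let Pb := Pb_map Xb Vb in
      let P := P_map X V in
      forall (i : 'I_m) (k : 'I_K),
        submxrow (row i Pb) k = submxrow (row i P) k *m A_ k /\
        submxrow (row i P) k *m A_ k *m yb_ k = submxrow (row i Pb) k *m yb_ k).
Proof.
split.
  move=> nb n yb Xb Vb A Vpd rkA y X V Pb P.
  have PA : P *m A = Pb.
    by apply: P_map_embed; [exact/eqP | exact: sym_posdef_unitmx].
  split=> // i; split; first by rewrite -PA row_mul.
  by rewrite /y mulmxA -row_mul PA.
move=> K nb_ n_ yb_ Xb Vb_ A_ Vb A yb Vpd rkA_ X V Pb P i k.
have PA : P *m A = Pb.
  apply: P_map_embed; last exact: sym_posdef_unitmx.
  by apply: bdiag_row_full => k'; exact/eqP.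
have PbkE : submxrow (row i Pb) k = submxrow (row i P) k *m A_ k.
  by rewrite -PA row_mul submxrow_mul_bdiag.
by rewrite PbkE.
Qed.
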